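(* Let $n \ge 3$. For $n$-simplices in $\mathbb{E}^n$ with vertices labeled $1,\dots,n+1$, let $E = (l_e)_e$ be the vector of the $n(n+1)/2$ edge lengths (indexed by the $2$-element subsets $e$ of $\{1,\dots,n+1\}$) and let $F = (V_S)_S$ be the vector of the $n(n+1)/2$ $(n-2)$-dimensional volumes of the $(n-2)$-dimensional faces (indexed by the $(n-1)$-element subsets $S$ of $\{1,\dots,n+1\}$), regarded as a function of $E$. Let $p_1$ be the edge-length vector of the regular simplex with all edge lengths equal to $1$, and let $J(p_1) = \partial F/\partial E$ be the Jacobian matrix at $p_1$. Let $M$ be the matrix with rows indexed by the $(n-1)$-subsets $S$ and columns indexed by the $2$-subsets $e$, with $M_{S,e} = 1$ if $e \subset S$ (i.e. the edge $e$ is an edge of the face $S$) and $M_{S,e} = 0$ otherwise. Then there is a constant $c \neq 0$ such that $J(p_1) = c\,M$.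
   Context: An $n$-simplex in $\mathbb{E}^n$ is determined up to congruence by its edge lengths, so the face volumes are functions of the edge lengths near $p_1$. *)

From HB Require Import structures.
From mathcomp Require Import all_boot all_order all_algebra.
From mathcomp Require Import all_classical all_reals all_analysis.
Set Implicit Arguments. Unset Strict Implicit. Unset Printing Implicit Defensive.
Import Order.TTheory GRing.Theory Num.Theory.
Local Open Scope ring_scope.

(* Simplices with vertices labelled by 'I_n.+1 (i.e. 1..n+1 shifted to 0..n).
   An edge-length vector is a function E on subsets of vertices; only its
   values on 2-element subsets (the edges) are used. *)

Definition edist (R : realType) (m : nat) (E : {set 'I_m} -> R) (x y : 'I_m) : R :=
  if x == y then 0 else E [set x; y].

(* Gram matrix of the face S (an (n-1)-subset, i.e. an (n-2)-simplex) with
   respect to its base vertex b = first element of S: entries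
   <v_i - b, v_j - b> = (d(b,v_i)^2 + d(b,v_j)^2 - d(v_i,v_j)^2)/2,
   where v_1, ..., v_{n-2} are the remaining vertices of S. *)
Definition face_gram (R : realType) (n : nat) (E : {set 'I_n.+1} -> R)
    (S : {set 'I_n.+1}) : 'M[R]_(n - 2) :=
  let s := enum S in
  let v := fun k : nat => nth ord0 s k in
  \matrix_(i < n - 2, j < n - 2)
    ((edist E (v 0%N) (v i.+1) ^+ 2 + edist E (v 0%N) (v j.+1) ^+ 2
      - edist E (v i.+1) (v j.+1) ^+ 2) / 2).

Definition face_volume (R : realType) (n : nat) (E : {set 'I_n.+1} -> R)
    (S : {set 'I_n.+1}) : R :=
  Num.sqrt (\det (face_gram E S)) / ((n - 2)`!)%:R.

Definition regular_lengths (R : realType) (n : nat) : {set 'I_n.+1} -> R :=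
  fun _ => 1.

Definition perturb (R : realType) (n : nat) (E : {set 'I_n.+1} -> R)
    (e : {set 'I_n.+1}) (t : R) : {set 'I_n.+1} -> R :=
  fun e' => E e' + (if e' == e then t else 0).

(* The face volume is [V_S = sqrt (det G_S) / (n-2)!], where [G_S] is the Gram matrix of
   the edge vectors of the face [S] issuing from its first vertex; its entries are
   polynomials in the edge lengths.  Lengthening the edge [e] of the regular simplex by
   [t] gives [G_S(t) = G + t G' + O(t^2)], where [G = (I + J)/2] ([J] the all-ones
   matrix of size [m = n - 2]) is the same for every face.  By Jacobi's formula
   [d/dt det G_S(t) = tr (adj G * G') = det G * tr (G^-1 G')], and since
   [G^-1 = 2 (I - J/(m+1))] this trace only depends on the number of ordered pairs of
   vertices of [S] spanning [e], which is [2] if [e \subset S] and [0] otherwise.  Hence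
   [dV_S/dl_e = 2 sqrt (det G) / (n-1)! * [e \subset S]]. *)

From Pilot Require Import Defs.
From HB Require Import structures.
From mathcomp Require Import all_boot all_order all_algebra.
From mathcomp Require Import all_classical all_reals all_analysis.
From mathcomp Require Import ring zify.
Import Order.TTheory GRing.Theory Num.Theory.
Local Open Scope ring_scope.
Set Implicit Arguments. Unset Strict Implicit. Unset Printing Implicit Defensive.

Section FirstOrderCoefficients.
Variable R : comNzRingType.

Lemma coef1M (p q : {poly R}) : (p * q)`_1 = p`_0 * q`_1 + p`_1 * q`_0.
Proof. by rewrite coefM big_ord_recr big_ord_recr big_ord0 /= add0r. Qed.

Lemma coef1_prod (I : eqType) (r : seq I) (P : I -> {poly R}) : uniq r ->
  (\prod_(i <- r) P i)`_1 =
  \sum_(k <- r) \prod_(i <- r) (if i == k then (P i)`_1 else (P i)`_0).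
Proof.
elim: r => [|a r IH] /=; first by rewrite !big_nil coef1.
case/andP => ar ur.
rewrite big_cons coef1M IH // !big_cons eqxx coef0_prod addrC mulr_sumr.
congr (_ * _ + _).
- by apply: eq_big_seq => i ir; case: eqP ir ar => // -> ->.
- apply: eq_big_seq => k kr.
  by rewrite big_cons; case: eqP kr ar => // -> ->.
Qed.

Lemma coef0_det (m : nat) (M : 'M[{poly R}]_m) :
  (\det M)`_0 = \det (\matrix_(i, j) (M i j)`_0).
Proof.
by rewrite -[_`_0]/(coefp 0 _) -det_map_mx; congr (\det _); apply/matrixP => i j; rewrite !mxE.
Qed.

Lemma coef1_det (m : nat) (M : 'M[{poly R}]_m) :
  (\det M)`_1 =
  \sum_k \det (\matrix_(i, j) (if i == k then (M i j)`_1 else (M i j)`_0)).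
Proof.
rewrite /determinant coef_sum exchange_big /=; apply: eq_bigr => s _.
rewrite -mulr_sumr; case: (perm.odd_perm s);
  rewrite ?expr1 ?expr0 ?mulN1r ?mul1r ?coefN; [congr (- _)|];
  rewrite coef1_prod ?index_enum_uniq //; apply: eq_bigr => k _;
  by apply: eq_bigr => i _; rewrite mxE.
Qed.

Lemma det_replace_row (m : nat) (A B : 'M[R]_m) k :
  \det (\matrix_(i, j) (if i == k then B i j else A i j)) = \sum_j B k j * \adj A j k.
Proof.
rewrite (expand_det_row _ k); apply: eq_bigr => j _.
rewrite !mxE eqxx /cofactor; congr (_ * (_ * \det _)).
by apply/matrixP => a b; rewrite !mxE eq_sym (negbTE (neq_lift k a)).
Qed.

(* Jacobi's formula: to first order, det (A + t B) = det A + t tr (adj A B). *)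
Lemma coef1_det_adj (m : nat) (M : 'M[{poly R}]_m) :
  (\det M)`_1 =
  \tr (\adj (\matrix_(i, j) (M i j)`_0) *m \matrix_(i, j) (M i j)`_1).
Proof.
rewrite coef1_det mxtrace_mulC /mxtrace; apply: eq_bigr => k _.
rewrite mxE -det_replace_row; congr (\det _).
by apply/matrixP => i j; rewrite !mxE.
Qed.

End FirstOrderCoefficients.

Section RegularGram.
Variable R : numFieldType.
Variable m : nat.

Local Notation J := (const_mx 1 : 'M[R]_m).

Lemma mulmx_const1 : J *m J = m%:R *: J.
Proof.
apply/matrixP => i j; rewrite !mxE.
by under eq_bigr do rewrite !mxE mulr1; rewrite sumr_const card_ord mulr1.
Qed.

Definition regular_gram : 'M[R]_m := 2^-1 *: (1%:M + J).

Definition regular_gram_inv : 'M[R]_m := 2 *: (1%:M - m.+1%:R^-1 *: J).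

Lemma regular_gramE i j : regular_gram i j = if i == j then 1 else 2^-1.
Proof. by rewrite !mxE; case: eqP => _ /=; field. Qed.

Lemma mulmx_regular_gram_inv : regular_gram *m regular_gram_inv = 1%:M.
Proof.
rewrite /regular_gram /regular_gram_inv -scalemxAl -scalemxAr scalerA mulVf ?pnatr_eq0 //.
rewrite scale1r mulmxDl mulmxBr !mul1mx mulmxBr mulmx1 -scalemxAr mulmx_const1 scalerA.
have -> : (m.+1%:R^-1 * m%:R : R) = 1 - m.+1%:R^-1.
  have m1 : (m.+1%:R : R) != 0 by rewrite pnatr_eq0.
  by apply: (mulfI m1); rewrite mulrA mulfV // mulrBr mulfV // mulr1 -natr1 addrK mul1r.
by rewrite scalerBl scale1r subKr subrK.
Qed.

Lemma det_regular_gram_neq0 : \det regular_gram != 0.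
Proof.
apply/eqP => det0; have := congr1 determinant mulmx_regular_gram_inv.
by rewrite det_mulmx det0 mul0r det1 => /eqP; rewrite eq_sym oner_eq0.
Qed.

Lemma adj_regular_gram : \adj regular_gram = \det regular_gram *: regular_gram_inv.
Proof.
by rewrite -[\adj _]mulmx1 -mulmx_regular_gram_inv mulmxA mul_adj_mx mul_scalar_mx.
Qed.

Lemma mxtrace_regular_gram_inv_mul (A : 'M[R]_m) :
  \tr (regular_gram_inv *m A) = 2 * (\tr A - m.+1%:R^-1 * \sum_i \sum_j A i j).
Proof.
rewrite -scalemxAl mxtraceZ mulmxBl mul1mx -scalemxAl raddfB /= mxtraceZ.
congr (2 * (_ - _ * _)); rewrite /mxtrace exchange_big; apply: eq_bigr => i _.
by rewrite mxE; apply: eq_bigr => j _; rewrite mxE mul1r.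
Qed.

End RegularGram.

Lemma det_regular_gram_gt0 (R : rcfType) (m : nat) : 0 < \det (regular_gram R m).
Proof.
rewrite lt0r det_regular_gram_neq0 /=.
(* [I + J = (I + c J)^2] as soon as [m c^2 + 2 c = 1], e.g. for [c = 1/(1 + sqrt (m+1))]. *)
pose s : R := Num.sqrt m.+1%:R.
have m_sqrt : m%:R = s ^+ 2 - 1 by rewrite sqr_sqrtr ?ler0n // -natr1 addrK.
have s1_neq0 : 1 + s != 0 by rewrite gt_eqF // ltr_wpDr ?sqrtr_ge0.
pose c := (1 + s)^-1.
have c_root : m%:R * c ^+ 2 + 2 * c = 1 by rewrite m_sqrt /c; field.
clearbody c.
pose H : 'M[R]_m := 1%:M + c *: const_mx 1.
have -> : regular_gram R m = 2^-1 *: (H *m H).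
  rewrite /regular_gram /H mulmxDl !mulmxDr !mul1mx -!scalemxAl -!scalemxAr.
  rewrite mulmx_const1 mulmx1 !scalerA -addrA -!scalerDl.
  by rewrite [c + _](_ : _ = 1) ?scale1r // -[RHS]c_root; ring.
by rewrite detZ det_mulmx -expr2 mulr_ge0 ?sqr_ge0 // exprn_ge0 // invr_ge0 ler0n.
Qed.

Lemma mxtrace_regular_gram_inv_mul_gram (R : numFieldType) (m : nat)
    (f : 'I_m -> R) (g : 'I_m -> 'I_m -> R) : (forall k, g k k = 0) ->
  \tr (regular_gram_inv R m *m \matrix_(i, j) (f i + f j - g i j)) =
  2 / m.+1%:R * (2 * \sum_k f k + \sum_i \sum_j g i j).
Proof.
move=> g0; rewrite mxtrace_regular_gram_inv_mul.
transitivity (2 * (2 * \sum_k f k -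
  m.+1%:R^-1 * (m%:R * (2 * \sum_k f k) - \sum_i \sum_j g i j))).
  congr (2 * (_ - _ * _)).
  - by rewrite /mxtrace mulr_sumr; apply: eq_bigr => k _; rewrite mxE g0 subr0 mulr_natl mulr2n.
  - under eq_bigr do under eq_bigr do rewrite mxE.
    under eq_bigr do rewrite sumrB big_split /= sumr_const card_ord.
    rewrite sumrB big_split /= sumr_const card_ord sumrMnl -mulr_natr.
    by congr (_ - _); ring.
by field; rewrite addrC natr1 pnatr_eq0.
Qed.

Lemma is_derive_sqrt_horner_div (R : realType) (p : {poly R}) (k : R) : 0 < p`_0 ->
  is_derive (0 : R) (1 : R) (fun t => Num.sqrt p.[t] / k) (p`_1 / (2 * Num.sqrt p`_0) / k).
Proof.
move=> p0.
have sqrt_p : is_derive (0 : R) (1 : R) (Num.sqrt \o horner p)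
    ((2 * Num.sqrt p`_0)^-1 * p`_1).
  rewrite -horner_coef0 -[p`_1]mulr1n -coef_deriv -horner_coef0.
  by apply: is_derive1_comp; apply: is_derive1_sqrt; rewrite horner_coef0.
have -> : (fun t => Num.sqrt p.[t] / k) = k^-1 *: (Num.sqrt \o horner p).
  by apply/funext => t /=; rewrite mulrC.
rewrite [_ / k]mulrC [p`_1 / _]mulrC.
exact: is_deriveZ.
Qed.

Definition regular_face_volume_slope (R : rcfType) (m : nat) : R :=
  2 * Num.sqrt (\det (regular_gram R m)) / (m.+1)`!%:R.

Lemma regular_face_volume_slope_gt0 (R : rcfType) (m : nat) :
  0 < regular_face_volume_slope R m.
Proof.
by rewrite divr_gt0 ?mulr_gt0 ?sqrtr_gt0 ?det_regular_gram_gt0 ?ltr0n ?fact_gt0.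
Qed.

Section PairCounting.
Variables (R : nzSemiRingType) (T : finType).
Implicit Types (A : {set T}) (a b x y : T).

Lemma eq_set2 a b x y : a != b ->
  ([set x; y] == [set a; b]) = ((x == a) && (y == b)) || ((x == b) && (y == a)).
Proof.
move=> ab; apply/eqP/idP => [xy_ab|]; last first.
  by case/orP => /andP[/eqP -> /eqP ->] //; rewrite finset.setUC.
have /set2P[x_a|x_b] : x \in [set a; b] by rewrite -xy_ab set21.
- have : b \in [set x; y] by rewrite xy_ab set22.
  by rewrite x_a !inE eq_sym (negbTE ab) eqxx => /= /eqP ->; rewrite eqxx.
- have : a \in [set x; y] by rewrite xy_ab set21.
  by rewrite x_b !inE (negbTE ab) eqxx => /= /eqP ->; rewrite eqxx orbT.
Qed.

Lemma sum_mem_eq A b : \sum_(x in A) ((x == b)%:R : R) = (b \in A)%:R.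
Proof.
case: (boolP (b \in A)) => bA.
  by rewrite (bigD1 b) //= eqxx big1 ?addr0 // => x /andP[_ /negbTE ->].
by rewrite big1 // => x xA; case: eqP xA bA => // -> ->.
Qed.

Lemma sum_edge_indicator A a b : a != b ->
  \sum_(x in A) \sum_(y in A) (([set x; y] == [set a; b])%:R : R) =
  2 * ([set a; b] \subset A)%:R.
Proof.
move=> ab; rewrite finset.subUset !finset.sub1set.
have indicatorE x y : (([set x; y] == [set a; b])%:R : R) =
    (x == a)%:R * (y == b)%:R + (x == b)%:R * (y == a)%:R.
  rewrite eq_set2 //; have [->|xa] := eqVneq x a.
    by rewrite (negbTE ab) ?eqxx orbF mul1r mul0r addr0.
  by rewrite /= mul0r add0r -natrM mulnb.
under eq_bigr do under eq_bigr do rewrite indicatorE.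
under eq_bigr do rewrite big_split /= -!mulr_sumr !sum_mem_eq.
rewrite big_split /= -!mulr_suml !sum_mem_eq.
by case: (a \in A); case: (b \in A); rewrite /= ?mulr0 ?mul0r ?mulr1 ?addr0.
Qed.

End PairCounting.

Section RegularSimplex.
Variables (R : realType) (n : nat).
Implicit Types (e S : {set 'I_n.+1}) (x y : 'I_n.+1).

Definition face_vertex (S : {set 'I_n.+1}) (k : nat) : 'I_n.+1 := nth ord0 (enum S) k.

Definition edge_indicator (e : {set 'I_n.+1}) (x y : 'I_n.+1) : R := ([set x; y] == e)%:R.

Definition regular_dist_poly (e : {set 'I_n.+1}) (x y : 'I_n.+1) : {poly R} :=
  if x == y then 0 else 1 + (edge_indicator e x y)%:P * 'X.

Definition regular_gram_poly (e S : {set 'I_n.+1}) : 'M[{poly R}]_(n - 2) :=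
  let d := regular_dist_poly e in let v := face_vertex S in
  \matrix_(i, j) ((d (v 0) (v i.+1) ^+ 2 + d (v 0) (v j.+1) ^+ 2 - d (v i.+1) (v j.+1) ^+ 2)
                  * (2^-1)%:P).

Lemma edist_perturb_regular e t x y :
  Defs.edist (perturb (@regular_lengths R n) e t) x y = (regular_dist_poly e x y).[t].
Proof.
rewrite /Defs.edist /regular_dist_poly /perturb /regular_lengths /edge_indicator.
by case: (x == y); [rewrite horner0 | case: (_ == e); rewrite !hornerE].
Qed.

Lemma face_volume_perturb_regular e S t :
  face_volume (perturb (@regular_lengths R n) e t) S =
  Num.sqrt (\det (regular_gram_poly e S)).[t] / ((n - 2)`!)%:R.
Proof.
rewrite /face_volume -[_.[t]]/(horner_eval t _) -det_map_mx; congr (Num.sqrt (\det _) / _).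
by apply/matrixP => i j; rewrite !mxE /= !edist_perturb_regular /horner_eval !hornerE.
Qed.

Lemma edge_indicatorC e x y : edge_indicator e x y = edge_indicator e y x.
Proof. by rewrite /edge_indicator finset.setUC. Qed.

Lemma edge_indicator_id e x : #|e| = 2%N -> edge_indicator e x x = 0.
Proof.
move=> e2; rewrite /edge_indicator finset.setUid; case: eqP => // e_x.
by move: e2; rewrite -e_x cards1.
Qed.

Lemma coef0_regular_dist_poly e x y : (regular_dist_poly e x y)`_0 = (x != y)%:R.
Proof.
rewrite /regular_dist_poly; case: (x == y); first by rewrite coef0.
by rewrite coefD coef1 coefCM coefX mulr0 addr0.
Qed.

Lemma coef1_regular_dist_poly e x y : #|e| = 2%N ->
  (regular_dist_poly e x y)`_1 = edge_indicator e x y.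
Proof.
move=> e2; rewrite /regular_dist_poly; case: eqP => [->|_].
  by rewrite coef0 edge_indicator_id.
by rewrite coefD coef1 coefCM coefX mulr1 add0r.
Qed.

Lemma eq_face_vertex S i j : #|S| = n.-1 -> (i < n.-1)%N -> (j < n.-1)%N ->
  (face_vertex S i == face_vertex S j) = (i == j).
Proof. by move=> S_card i_lt j_lt; rewrite nth_uniq ?enum_uniq // -cardE S_card. Qed.

Lemma coef0_regular_gram_poly e S : #|S| = n.-1 ->
  \matrix_(i, j) (regular_gram_poly e S i j)`_0 = regular_gram R (n - 2).
Proof.
move=> S_card; apply/matrixP => i j; rewrite regular_gramE !mxE coefMC coefB coefD.
rewrite !expr2 !coef0M !coef0_regular_dist_poly.
have i_lt : (i.+1 < n.-1)%N by have := ltn_ord i; lia.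
have j_lt : (j.+1 < n.-1)%N by have := ltn_ord j; lia.
have zero_lt : (0 < n.-1)%N by lia.
rewrite !eq_face_vertex //= eqSS -[(i : nat) == j]/(i == j).
by case: (i == j) => /=; field.
Qed.

Lemma coef1_sqr_regular_dist_poly e x y : #|e| = 2%N ->
  (regular_dist_poly e x y ^+ 2)`_1 = 2 * edge_indicator e x y.
Proof.
move=> e2; rewrite expr2 coef1M coef0_regular_dist_poly coef1_regular_dist_poly //.
by case: eqP => [->|_] /=; rewrite ?edge_indicator_id //; ring.
Qed.

Lemma coef1_regular_gram_poly e S : #|e| = 2%N ->
  \matrix_(i, j) (regular_gram_poly e S i j)`_1 =
  \matrix_(i, j) (edge_indicator e (face_vertex S 0) (face_vertex S i.+1)
                  + edge_indicator e (face_vertex S 0) (face_vertex S j.+1)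
                  - edge_indicator e (face_vertex S i.+1) (face_vertex S j.+1)).
Proof.
move=> e2; apply/matrixP => i j; rewrite !mxE coefMC coefB coefD.
by rewrite !coef1_sqr_regular_dist_poly //; field.
Qed.

Lemma sum_face_vertex S m (F : 'I_n.+1 -> R) : #|S| = m ->
  \sum_(k < m) F (face_vertex S k) = \sum_(x in S) F x.
Proof. by move=> S_card; rewrite -[RHS]big_enum /= [RHS](big_nth ord0) -cardE S_card big_mkord. Qed.

Lemma edge_count_face_vertices e S : (1 < n)%N -> #|S| = n.-1 -> #|e| = 2%N ->
  2 * \sum_(k < n - 2) edge_indicator e (face_vertex S 0) (face_vertex S k.+1)
  + \sum_(k < n - 2) \sum_(j < n - 2)
      edge_indicator e (face_vertex S k.+1) (face_vertex S j.+1)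
  = 2 * (e \subset S)%:R.
Proof.
move=> n_gt1 S_card e2; have S_card' : #|S| = (n - 2).+1 by lia.
have -> : 2 * (e \subset S)%:R = \sum_(x in S) \sum_(y in S) edge_indicator e x y.
  by move: e2 => /eqP/cards2P[a [b [ab ->]]]; rewrite sum_edge_indicator.
rewrite -(sum_face_vertex _ S_card').
under [RHS]eq_bigr => x _ do rewrite -(sum_face_vertex _ S_card').
rewrite big_ord_recl big_ord_recl /= edge_indicator_id // add0r.
under [X in _ = _ + X]eq_bigr do rewrite big_ord_recl edge_indicatorC.
by rewrite big_split /=; ring.
Qed.

Lemma is_derive_face_volume_regular e S : (1 < n)%N -> #|S| = n.-1 -> #|e| = 2%N ->
  is_derive (0 : R) (1 : R) (fun t => face_volume (perturb (@regular_lengths R n) e t) S)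
    (regular_face_volume_slope R (n - 2) * (e \subset S)%:R).
Proof.
move=> n_gt1 S_card e2.
have D_gt0 := det_regular_gram_gt0 R (n - 2).
set D := \det (regular_gram R (n - 2)) in D_gt0 *.
set p := \det (regular_gram_poly e S).
have p0 : p`_0 = D by rewrite coef0_det coef0_regular_gram_poly.
have p1 : p`_1 = D * (2 / (n - 2).+1%:R * (2 * (e \subset S)%:R)).
  rewrite coef1_det_adj coef0_regular_gram_poly // coef1_regular_gram_poly //.
  rewrite adj_regular_gram -scalemxAl mxtraceZ mxtrace_regular_gram_inv_mul_gram.
    by rewrite edge_count_face_vertices.
  by move=> k; rewrite edge_indicator_id.
have -> : (fun t => face_volume (perturb (@regular_lengths R n) e t) S) =
          (fun t => Num.sqrt p.[t] / ((n - 2)`!)%:R).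
  by apply/funext => t; rewrite face_volume_perturb_regular.
have p0_gt0 : 0 < p`_0 by rewrite p0.
have := is_derive_sqrt_horner_div ((n - 2)`!)%:R p0_gt0.
suff -> : p`_1 / (2 * Num.sqrt p`_0) / ((n - 2)`!)%:R =
          regular_face_volume_slope R (n - 2) * (e \subset S)%:R by [].
have sqrtD_neq0 : Num.sqrt D != 0 by rewrite gt_eqF ?sqrtr_gt0.
have fact_neq0 : ((n - 2)`!)%:R != 0 :> R by rewrite pnatr_eq0 -lt0n fact_gt0.
rewrite p0 p1 /regular_face_volume_slope -/D.
have D_sq : D = Num.sqrt D ^+ 2 by rewrite sqr_sqrtr ?ltW.
set s := Num.sqrt D in sqrtD_neq0 D_sq *; rewrite D_sq.
by rewrite factS natrM; field; rewrite fact_neq0 sqrtD_neq0 addrC natr1 pnatr_eq0.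
Qed.

End RegularSimplex.

Theorem mainTheorem2 (R : realType) (n : nat) (hn : (3 <= n)%N) :
  exists c : R, c != 0 /\
    forall S e : {set 'I_n.+1}, #|S| = n.-1 -> #|e| = 2%N ->
      derivable (fun t : R => face_volume (perturb (@regular_lengths R n) e t) S) 0 1 /\
      derive1 (fun t : R => face_volume (perturb (@regular_lengths R n) e t) S) 0
        = c * (e \subset S)%:R.
Proof.
exists (regular_face_volume_slope R (n - 2)).
split; first by rewrite gt_eqF ?regular_face_volume_slope_gt0.
move=> S e S_card e2.
have := is_derive_face_volume_regular R (ltnW hn) S_card e2.
by split; [exact: ex_derive | rewrite derive1E derive_val].
Qed.
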